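(* Let $S$ be a functional PTS specification. For any $\lambda\Pi/S$ context $\Gamma$ and any $\Gamma$-term $M$ of $\lambda\Pi/S$ (i.e. $\mathrm{WF}_{\lambda\Pi/S}(\Gamma)$ and $\Gamma\vdash_{\lambda\Pi/S}M:A$ for some $A$), there is a term $M^-$ of $\lambda\Pi^-/S$ such that $M\longrightarrow_\beta^* M^-$.
   Context: $\lambda\Pi$ is the PTS with sorts $\mathsf{Type},\mathsf{Kind}$, axiom $\mathsf{Type}:\mathsf{Kind}$ and rules $(\mathsf{Type},\mathsf{Type}),(\mathsf{Type},\mathsf{Kind})$ (terms $s\mid x\mid M\,N\mid\lambda x:A.M\mid\Pi x:A.B$, standard PTS typing rules). Given a well-formed $\lambda\Pi$ context $\Sigma$ and rewrite rules $R$, $\lambda\Pi/(\Sigma,R)$ has the $\lambda\Pi$ typing rules except that variables may also be declared in $\Sigma$ (and new declarations must avoid $\Sigma$) and conversion is modulo $\equiv_{\beta R}$, the congruence generated by $\beta$-reduction and the rewrite rules. For a PTS specification $S=(\mathcal S,\mathcal A,\mathcal R)$, $\lambda\Pi/S=\lambda\Pi/(\Sigma_S,R_S)$ where $\Sigma_S$ declares $u_s:\mathsf{Type}$, $\varepsilon_s:u_s\to\mathsf{Type}$ ($s\in\mathcal S$), $\dot s_1:u_{s_2}$ ($(s_1:s_2)\in\mathcal A$), $\dot\pi_{s_1s_2s_3}:\Pi\alpha:u_{s_1}.(\varepsilon_{s_1}\alpha\to u_{s_2})\to u_{s_3}$ ($(s_1,s_2,s_3)\in\mathcal R$), and $R_S$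 consists of $\varepsilon_{s_2}\dot s_1\leadsto u_{s_1}$ for $(s_1:s_2)\in\mathcal A$ and $\varepsilon_{s_3}(\dot\pi_{s_1s_2s_3}AB)\leadsto\Pi x:\varepsilon_{s_1}A.\,\varepsilon_{s_2}(B\,x)$ for $(s_1,s_2,s_3)\in\mathcal R$. A $\Gamma$-term $P$ of type $C$ is at the level of $\mathsf{Kind}$ if $\Gamma\vdash C:\mathsf{Kind}$. A $\mathsf{Kind}$-level $\beta$-redex is a subterm $(\lambda x:B.C)\,P$ at the level of $\mathsf{Kind}$ (in its typing context). The $\lambda\Pi^-/S$ terms are the well-typed $\lambda\Pi/S$ terms that contain no $\mathsf{Kind}$-level $\beta$-redex. *)

From Stdlib Require Import List Arith Relations.
Import ListNotations.

Section LambdaPiModulo.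

(* A PTS specification S = (sorts, axioms, rules). *)
Variable srt : Type.
Variable ax : srt -> srt -> Prop.
Variable rl : srt -> srt -> srt -> Prop.

Definition functional_spec : Prop :=
  (forall s1 s2 s2', ax s1 s2 -> ax s1 s2' -> s2 = s2') /\
  (forall s1 s2 s3 s3', rl s1 s2 s3 -> rl s1 s2 s3' -> s3 = s3').

Inductive const : Type :=
| Cu (s : srt)
| Ceps (s : srt)
| Cdot (s1 s2 : srt)
| Cpi (s1 s2 s3 : srt).

Inductive term : Type :=
| tType
| tKind
| tVar (n : nat)
| tConst (c : const)
| tApp (M N : term)
| tLam (A M : term)
| tPi (A B : term).

Fixpoint lift (k n : nat) (t : term) : term :=
  match t with
  | tType => tType
  | tKind => tKind
  | tVar i => if Nat.leb k i then tVar (i + n) else tVar i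
  | tConst c => tConst c
  | tApp M N => tApp (lift k n M) (lift k n N)
  | tLam A M => tLam (lift k n A) (lift (S k) n M)
  | tPi A B => tPi (lift k n A) (lift (S k) n B)
  end.

(* subst_rec u t k = t[k := u] (with u lifted under binders, free vars above k lowered) *)
Fixpoint subst_rec (u t : term) (k : nat) : term :=
  match t with
  | tType => tType
  | tKind => tKind
  | tVar i =>
      if Nat.ltb i k then tVar i
      else if Nat.eqb i k then lift 0 k u
      else tVar (i - 1)
  | tConst c => tConst c
  | tApp M N => tApp (subst_rec u M k) (subst_rec u N k)
  | tLam A M => tLam (subst_rec u A k) (subst_rec u M (S k))
  | tPi A B => tPi (subst_rec u A k) (subst_rec u B (S k))
  end.

Definition subst (t u : term) : term := subst_rec u t 0.

Inductive head_beta : term -> term -> Prop :=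
| hb_beta : forall A M N, head_beta (tApp (tLam A M) N) (subst M N).

Inductive head_R : term -> term -> Prop :=
| hR_ax : forall s1 s2, ax s1 s2 ->
    head_R (tApp (tConst (Ceps s2)) (tConst (Cdot s1 s2))) (tConst (Cu s1))
| hR_rl : forall s1 s2 s3 A B, rl s1 s2 s3 ->
    head_R (tApp (tConst (Ceps s3)) (tApp (tApp (tConst (Cpi s1 s2 s3)) A) B))
           (tPi (tApp (tConst (Ceps s1)) A)
                (tApp (tConst (Ceps s2)) (tApp (lift 0 1 B) (tVar 0)))).

Inductive ctx_clos (r : term -> term -> Prop) : term -> term -> Prop :=
| cc_root : forall M N, r M N -> ctx_clos r M N
| cc_appl : forall M M' N, ctx_clos r M M' -> ctx_clos r (tApp M N) (tApp M' N)
| cc_appr : forall M N N', ctx_clos r N N' -> ctx_clos r (tApp M N) (tApp M N')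
| cc_laml : forall A A' M, ctx_clos r A A' -> ctx_clos r (tLam A M) (tLam A' M)
| cc_lamr : forall A M M', ctx_clos r M M' -> ctx_clos r (tLam A M) (tLam A M')
| cc_pil : forall A A' B, ctx_clos r A A' -> ctx_clos r (tPi A B) (tPi A' B)
| cc_pir : forall A B B', ctx_clos r B B' -> ctx_clos r (tPi A B) (tPi A B').

Definition beta1 : term -> term -> Prop := ctx_clos head_beta.

Definition beta_star : term -> term -> Prop := clos_refl_trans term beta1.

Definition conv_betaR : term -> term -> Prop :=
  clos_refl_sym_trans term (ctx_clos (fun M N => head_beta M N \/ head_R M N)).

Inductive sig_decl : const -> term -> Prop :=
| sd_u : forall s, sig_decl (Cu s) tType
| sd_eps : forall s, sig_decl (Ceps s) (tPi (tConst (Cu s)) tType)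
| sd_dot : forall s1 s2, ax s1 s2 -> sig_decl (Cdot s1 s2) (tConst (Cu s2))
| sd_pi : forall s1 s2 s3, rl s1 s2 s3 ->
    sig_decl (Cpi s1 s2 s3)
      (tPi (tConst (Cu s1))
           (tPi (tPi (tApp (tConst (Ceps s1)) (tVar 0)) (tConst (Cu s2)))
                (tConst (Cu s3)))).

Definition is_sort (t : term) : Prop := t = tType \/ t = tKind.

(* Contexts: the head of the list is the most recent declaration (index 0). *)
Definition ctx := list term.

Inductive wf : ctx -> Prop :=
| wf_nil : wf []
| wf_cons : forall G A s, typing G A s -> is_sort s -> wf (A :: G)
with typing : ctx -> term -> term -> Prop :=
| ty_sort : forall G, wf G -> typing G tType tKind
| ty_var : forall G n A, wf G -> nth_error G n = Some A ->
    typing G (tVar n) (lift 0 (S n) A)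
| ty_const : forall G c A, wf G -> sig_decl c A -> typing G (tConst c) A
| ty_pi : forall G A B s, typing G A tType -> typing (A :: G) B s -> is_sort s ->
    typing G (tPi A B) s
| ty_lam : forall G A B M s, typing G (tPi A B) s -> typing (A :: G) M B ->
    typing G (tLam A M) (tPi A B)
| ty_app : forall G M N A B, typing G M (tPi A B) -> typing G N A ->
    typing G (tApp M N) (subst B N)
| ty_conv : forall G M A B s, typing G M A -> typing G B s -> is_sort s ->
    conv_betaR A B -> typing G M B.

(* subterm_in G M D N : N is a subterm of M, and D is its typing context
   (G extended with the binders crossed to reach N). *)
Inductive subterm_in : ctx -> term -> ctx -> term -> Prop :=
| st_refl : forall G M, subterm_in G M G M
| st_appl : forall G M N D P, subterm_in G M D P -> subterm_in G (tApp M N) D P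
| st_appr : forall G M N D P, subterm_in G N D P -> subterm_in G (tApp M N) D P
| st_laml : forall G A M D P, subterm_in G A D P -> subterm_in G (tLam A M) D P
| st_lamr : forall G A M D P, subterm_in (A :: G) M D P -> subterm_in G (tLam A M) D P
| st_pil : forall G A B D P, subterm_in G A D P -> subterm_in G (tPi A B) D P
| st_pir : forall G A B D P, subterm_in (A :: G) B D P -> subterm_in G (tPi A B) D P.

Definition kind_level (G : ctx) (P : term) : Prop :=
  exists C, typing G P C /\ typing G C tKind.

Definition has_kind_redex (G : ctx) (M : term) : Prop :=
  exists D B C P, subterm_in G M D (tApp (tLam B C) P) /\
                  kind_level D (tApp (tLam B C) P).

Definition lamPiMinus_term (G : ctx) (M : term) : Prop :=
  (exists A, typing G M A) /\ ~ has_kind_redex G M.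

End LambdaPiModulo.

Arguments tType {srt}.
Arguments tKind {srt}.
Arguments tVar {srt}.
Arguments functional_spec {srt}.
Arguments beta_star {srt}.
Arguments wf {srt}.
Arguments typing {srt}.
Arguments lamPiMinus_term {srt}.
Arguments has_kind_redex {srt}.
Arguments kind_level {srt}.

(* Every well-typed term of lambdaPi/S sits at one of three levels, objects,
   types (and type families) and kinds, which [has_class] reads off the shape of
   the term alone: a term has class one less than its type, and classes are
   invariant under beta-R reduction, hence (by confluence) under conversion.  A
   Kind-level redex is therefore exactly a beta-redex of class 1, and its
   argument is an object.  Contracting such redexes bottom-up needs no
   termination argument: substituting an object for a variable creates no new
   class-1 redex, since an application headed by that variable is an object.
   Subject reduction keeps the result well typed. *)

From Stdlib Require Import List Arith Relations Lia.
Import ListNotations.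

Arguments tApp {srt}. Arguments tLam {srt}. Arguments tPi {srt}. Arguments tConst {srt}.
Arguments lift {srt}. Arguments subst_rec {srt}. Arguments subst {srt}.
Arguments Cu {srt}. Arguments Ceps {srt}. Arguments Cdot {srt}. Arguments Cpi {srt}.
Arguments head_beta {srt}. Arguments head_R {srt}. Arguments ctx_clos {srt}.
Arguments beta1 {srt}. Arguments conv_betaR {srt}. Arguments sig_decl {srt}.
Arguments is_sort {srt}. Arguments subterm_in {srt}.

(** * Lifting and substitution *)

Ltac case_nat_tests := repeat match goal with
  | H : Nat.leb _ _ = true |- _ => apply Nat.leb_le in H
  | H : Nat.leb _ _ = false |- _ => apply Nat.leb_gt in H
  | H : Nat.ltb _ _ = true |- _ => apply Nat.ltb_lt in H
  | H : Nat.ltb _ _ = false |- _ => apply Nat.ltb_ge in H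
  | H : Nat.eqb _ _ = true |- _ => apply Nat.eqb_eq in H
  | H : Nat.eqb _ _ = false |- _ => apply Nat.eqb_neq in H
  | |- context [Nat.leb ?a ?b] => destruct (Nat.leb a b) eqn:?
  | |- context [Nat.ltb ?a ?b] => destruct (Nat.ltb a b) eqn:?
  | |- context [Nat.eqb ?a ?b] => destruct (Nat.eqb a b) eqn:?
  end.

Section DeBruijn.
Context {srt : Type}.
Notation term := (term srt).

Lemma lift0 (M : term) k : lift k 0 M = M.
Proof.
  revert k; induction M; intros; cbn [lift subst_rec]; f_equal; auto.
  case_nat_tests; f_equal; lia.
Qed.

Lemma simpl_lift (M : term) n k p i : k <= i <= k + n ->
  lift i p (lift k n M) = lift k (p + n) M.
Proof.
  revert n k p i; induction M; intros; cbn [lift subst_rec]; f_equal; auto; try (apply IHM2; lia).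
  case_nat_tests; cbn [lift subst_rec]; case_nat_tests; f_equal; lia.
Qed.

Lemma permute_lift (M : term) n k p i : i <= k ->
  lift i p (lift k n M) = lift (p + k) n (lift i p M).
Proof.
  revert n k p i; induction M; intros; cbn [lift subst_rec].
  3: case_nat_tests; cbn [lift subst_rec]; case_nat_tests; f_equal; lia.
  all: f_equal; auto; rewrite IHM2 by lia; f_equal; lia.
Qed.

Lemma simpl_subst (N M : term) n p k : k <= p <= n + k ->
  subst_rec N (lift k (S n) M) p = lift k n M.
Proof.
  revert n p k; induction M; intros; cbn [lift subst_rec].
  3: case_nat_tests; cbn [lift subst_rec]; case_nat_tests; f_equal; lia.
  all: f_equal; auto; apply IHM2; lia.
Qed.

Lemma commut_lift_subst_rec (N M : term) n p k : k <= p ->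
  lift k n (subst_rec N M p) = subst_rec N (lift k n M) (n + p).
Proof.
  revert n p k; induction M; intros; cbn [lift subst_rec].
  3: { case_nat_tests; cbn [lift subst_rec]; case_nat_tests; subst; try (f_equal; lia).
       rewrite simpl_lift by lia; f_equal; lia. }
  all: f_equal; auto; rewrite IHM2 by lia; f_equal; lia.
Qed.

Lemma distr_lift_subst_rec (N M : term) n p k : p <= k ->
  lift k n (subst_rec N M p) = subst_rec (lift (k - p) n N) (lift (S k) n M) p.
Proof.
  revert n p k; induction M; intros; cbn [lift subst_rec].
  3: { case_nat_tests; cbn [lift subst_rec]; case_nat_tests; subst; try (f_equal; lia).
       rewrite (permute_lift N _ (k - p) p 0) by lia; f_equal; lia. }
  all: f_equal; auto; rewrite IHM2 by lia; do 2 f_equal; lia.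
Qed.

Lemma distr_subst_rec (P N M : term) n p :
  subst_rec P (subst_rec N M p) (p + n) =
  subst_rec (subst_rec P N n) (subst_rec P M (S (p + n))) p.
Proof.
  revert n p; induction M; intros; cbn [lift subst_rec].
  3: { case_nat_tests; cbn [lift subst_rec]; case_nat_tests; subst; try (f_equal; lia).
       - rewrite commut_lift_subst_rec by lia; reflexivity.
       - rewrite simpl_subst by lia; reflexivity. }
  all: f_equal; auto; apply (IHM2 n (S p)).
Qed.

Lemma distr_lift_subst (M N : term) k n :
  lift k n (subst M N) = subst (lift (S k) n M) (lift k n N).
Proof. unfold subst; rewrite distr_lift_subst_rec, Nat.sub_0_r by lia; reflexivity. Qed.

Lemma distr_subst (P M N : term) k :
  subst_rec P (subst M N) k = subst (subst_rec P M (S k)) (subst_rec P N k).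
Proof. exact (distr_subst_rec P N M k 0). Qed.

Definition decode_pi (s1 s2 : srt) (A B : term) : term :=
  tPi (tApp (tConst (Ceps s1)) A) (tApp (tConst (Ceps s2)) (tApp (lift 0 1 B) (tVar 0))).

Lemma lift_decode_pi s1 s2 (A B : term) k n :
  lift k n (decode_pi s1 s2 A B) = decode_pi s1 s2 (lift k n A) (lift k n B).
Proof. unfold decode_pi; simpl; rewrite (permute_lift B n k 1 0) by lia; reflexivity. Qed.

Lemma subst_rec_decode_pi s1 s2 (A B P : term) k :
  subst_rec P (decode_pi s1 s2 A B) k = decode_pi s1 s2 (subst_rec P A k) (subst_rec P B k).
Proof.
  unfold decode_pi; simpl.
  rewrite (commut_lift_subst_rec P B 1 k 0) by lia; reflexivity.
Qed.

End DeBruijn.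

(** * Reduction and confluence *)

Lemma clos_rt_map {A B : Type} (f : A -> B) (R : relation A) (R' : relation B) :
  (forall x y, R x y -> R' (f x) (f y)) ->
  forall x y, clos_refl_trans A R x y -> clos_refl_trans B R' (f x) (f y).
Proof. intros Hf x y H; induction H; eauto using rt_step, rt_refl, rt_trans. Qed.

Lemma clos_rst_map {A B : Type} (f : A -> B) (R : relation A) (R' : relation B) :
  (forall x y, R x y -> R' (f x) (f y)) ->
  forall x y, clos_refl_sym_trans A R x y -> clos_refl_sym_trans B R' (f x) (f y).
Proof. intros Hf x y H; induction H; eauto using rst_step, rst_refl, rst_sym, rst_trans. Qed.

Section CompatibleClosure.
Context {srt : Type}.
Notation term := (term srt).
Context (r : relation term).
Notation red_r := (clos_refl_trans term (ctx_clos r)).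

Lemma ctx_clos_mono (r' : relation term) :
  (forall M N, r M N -> r' M N) -> forall M N, ctx_clos r M N -> ctx_clos r' M N.
Proof. intros Hr M N H; induction H; constructor; solve [auto]. Qed.

Lemma ctx_clos_lift :
  (forall M N k n, r M N -> r (lift k n M) (lift k n N)) ->
  forall M N, ctx_clos r M N -> forall k n, ctx_clos r (lift k n M) (lift k n N).
Proof. intros Hr M N H; induction H; intros; cbn [lift]; constructor; solve [auto]. Qed.

Lemma ctx_clos_subst_rec :
  (forall M N P k, r M N -> r (subst_rec P M k) (subst_rec P N k)) ->
  forall M N, ctx_clos r M N -> forall P k, ctx_clos r (subst_rec P M k) (subst_rec P N k).
Proof. intros Hr M N H; induction H; intros; cbn [subst_rec]; constructor; solve [auto]. Qed.

Lemma rt_ctx_clos_app M M' N N' : red_r M M' -> red_r N N' -> red_r (tApp M N) (tApp M' N').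
Proof.
  intros HM HN; apply rt_trans with (tApp M' N).
  - apply (clos_rt_map (fun X => tApp X N) (ctx_clos r)); auto using cc_appl.
  - apply (clos_rt_map (tApp M') (ctx_clos r)); auto using cc_appr.
Qed.

Lemma rt_ctx_clos_lam M M' N N' : red_r M M' -> red_r N N' -> red_r (tLam M N) (tLam M' N').
Proof.
  intros HM HN; apply rt_trans with (tLam M' N).
  - apply (clos_rt_map (fun X => tLam X N) (ctx_clos r)); auto using cc_laml.
  - apply (clos_rt_map (tLam M') (ctx_clos r)); auto using cc_lamr.
Qed.

Lemma rt_ctx_clos_pi M M' N N' : red_r M M' -> red_r N N' -> red_r (tPi M N) (tPi M' N').
Proof.
  intros HM HN; apply rt_trans with (tPi M' N).
  - apply (clos_rt_map (fun X => tPi X N) (ctx_clos r)); auto using cc_pil.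
  - apply (clos_rt_map (tPi M') (ctx_clos r)); auto using cc_pir.
Qed.

End CompatibleClosure.

Section Confluence.
Context {srt : Type} (ax : srt -> srt -> Prop) (rl : srt -> srt -> srt -> Prop).
Notation term := (term srt).

Definition betaR (M N : term) : Prop := head_beta M N \/ head_R ax rl M N.
Notation red1 := (ctx_clos betaR).
Notation red := (clos_refl_trans term red1).
Notation conv := (conv_betaR ax rl).

Inductive par : term -> term -> Prop :=
| par_type : par tType tType
| par_kind : par tKind tKind
| par_var n : par (tVar n) (tVar n)
| par_const c : par (tConst c) (tConst c)
| par_app M M' N N' : par M M' -> par N N' -> par (tApp M N) (tApp M' N')
| par_lam A A' M M' : par A A' -> par M M' -> par (tLam A M) (tLam A' M')
| par_pi A A' B B' : par A A' -> par B B' -> par (tPi A B) (tPi A' B')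
| par_beta A M M' N N' : par M M' -> par N N' -> par (tApp (tLam A M) N) (subst M' N')
| par_ax s1 s2 : ax s1 s2 ->
    par (tApp (tConst (Ceps s2)) (tConst (Cdot s1 s2))) (tConst (Cu s1))
| par_rl s1 s2 s3 A A' B B' : rl s1 s2 s3 -> par A A' -> par B B' ->
    par (tApp (tConst (Ceps s3)) (tApp (tApp (tConst (Cpi s1 s2 s3)) A) B))
        (decode_pi s1 s2 A' B').
Hint Constructors par : core.

Lemma par_refl M : par M M.
Proof. induction M; auto. Qed.
Hint Resolve par_refl : core.

Lemma par_lift M M' : par M M' -> forall k n, par (lift k n M) (lift k n M').
Proof.
  induction 1; intros; cbn [lift]; auto.
  - rewrite distr_lift_subst; auto.
  - rewrite lift_decode_pi; auto.
Qed.

Lemma par_subst_rec M M' : par M M' -> forall N N', par N N' -> forall k,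
  par (subst_rec N M k) (subst_rec N' M' k).
Proof.
  induction 1; intros; cbn [subst_rec]; auto.
  - case_nat_tests; auto using par_lift.
  - rewrite distr_subst; auto.
  - rewrite subst_rec_decode_pi; auto.
Qed.

Lemma par_subst M M' N N' : par M M' -> par N N' -> par (subst M N) (subst M' N').
Proof. intros; apply par_subst_rec; auto. Qed.
Hint Resolve par_beta par_subst : core.

Lemma par_decode_pi s1 s2 A A' B B' :
  par A A' -> par B B' -> par (decode_pi s1 s2 A B) (decode_pi s1 s2 A' B').
Proof. intros; unfold decode_pi; auto 6 using par_lift. Qed.

Lemma par_const_inv c X : par (tConst c) X -> X = tConst c.
Proof. inversion 1; auto. Qed.

Lemma par_lam_inv A M X : par (tLam A M) X ->
  exists A' M', X = tLam A' M' /\ par A A' /\ par M M'.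
Proof. inversion 1; subst; eauto. Qed.

Lemma par_pi_inv A B X : par (tPi A B) X ->
  exists A' B', X = tPi A' B' /\ par A A' /\ par B B'.
Proof. inversion 1; subst; eauto. Qed.

Lemma par_app_inv M N X : par (tApp M N) X ->
  (exists M' N', X = tApp M' N' /\ par M M' /\ par N N') \/
  (exists A M0 M0' N', M = tLam A M0 /\ X = subst M0' N' /\ par M0 M0' /\ par N N') \/
  (exists s1 s2, ax s1 s2 /\ M = tConst (Ceps s2) /\ N = tConst (Cdot s1 s2) /\
     X = tConst (Cu s1)) \/
  (exists s1 s2 s3 A A' B B', rl s1 s2 s3 /\ M = tConst (Ceps s3) /\
     N = tApp (tApp (tConst (Cpi s1 s2 s3)) A) B /\ par A A' /\ par B B' /\
     X = decode_pi s1 s2 A' B').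
Proof.
  inversion 1; subst;
    [left | right; left | right; right; left | right; right; right]; eauto 20.
Qed.

Lemma par_code_pi_inv s1 s2 s3 A B X :
  par (tApp (tApp (tConst (Cpi s1 s2 s3)) A) B) X ->
  exists A' B', X = tApp (tApp (tConst (Cpi s1 s2 s3)) A') B' /\ par A A' /\ par B B'.
Proof.
  inversion 1; subst.
  match goal with H : par (tApp _ A) _ |- _ => inversion H; subst end.
  match goal with H : par (tConst _) _ |- _ => inversion H; subst end.
  eauto.
Qed.

Definition par_joinable (M1 M2 : term) : Prop := exists M3, par M1 M3 /\ par M2 M3.

Lemma par_diamond_app M M1 N N1 :
  par M M1 -> (forall M2, par M M2 -> par_joinable M1 M2) ->
  par N N1 -> (forall N2, par N N2 -> par_joinable N1 N2) ->
  forall X, par (tApp M N) X -> par_joinable (tApp M1 N1) X.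
Proof.
  intros HM IHM HN IHN X HX.
  apply par_app_inv in HX as
    [(M2&N2&->&HM2&HN2)|[(A&M0&M0'&N2&->&->&HM0&HN2)|[(s1&s2&Hax&->&->&->)|
     (s1&s2&s3&A&A2&B&B2&Hrl&->&->&HA&HB&->)]]].
  - destruct (IHM _ HM2) as (M3&?&?), (IHN _ HN2) as (N3&?&?).
    exists (tApp M3 N3); auto.
  - apply par_lam_inv in HM as (A1&M0''&->&_&HM0').
    destruct (IHM (tLam A M0')) as (X&HX1&HX2); auto.
    apply par_lam_inv in HX2 as (A3&M3&->&_&HM3).
    apply par_lam_inv in HX1 as (A4&M4&E&_&HM4); injection E as <- <-.
    destruct (IHN _ HN2) as (N3&?&?).
    exists (subst M3 N3); auto.
  - apply par_const_inv in HM, HN; subst; exists (tConst (Cu s1)); auto.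
  - apply par_const_inv in HM; subst.
    apply par_code_pi_inv in HN as (A1&B1&->&_&_).
    destruct (IHN (tApp (tApp (tConst (Cpi s1 s2 s3)) A2) B2)) as (X&HX1&HX2); auto.
    apply par_code_pi_inv in HX2 as (A3&B3&->&HA3&HB3).
    apply par_code_pi_inv in HX1 as (A4&B4&E&HA4&HB4); injection E as <- <-.
    exists (decode_pi s1 s2 A3 B3); auto using par_decode_pi.
Qed.

Lemma par_diamond_beta A M M1 N N1 :
  (forall M2, par M M2 -> par_joinable M1 M2) ->
  (forall N2, par N N2 -> par_joinable N1 N2) ->
  forall X, par (tApp (tLam A M) N) X -> par_joinable (subst M1 N1) X.
Proof.
  intros IHM IHN X HX.
  apply par_app_inv in HX as
    [(M2&N2&->&HM2&HN2)|[(A0&M0&M0'&N2&E&->&HM0&HN2)|[(?&?&_&E&_)|(?&?&?&?&?&?&?&_&E&_)]]];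
    try discriminate.
  - apply par_lam_inv in HM2 as (A'&M2'&->&_&HM2).
    destruct (IHM _ HM2) as (M3&?&?), (IHN _ HN2) as (N3&?&?).
    exists (subst M3 N3); auto.
  - injection E as <- <-.
    destruct (IHM _ HM0) as (M3&?&?), (IHN _ HN2) as (N3&?&?).
    exists (subst M3 N3); auto.
Qed.

Lemma par_diamond_rl s1 s2 s3 A A1 B B1 : rl s1 s2 s3 ->
  (forall A2, par A A2 -> par_joinable A1 A2) ->
  (forall B2, par B B2 -> par_joinable B1 B2) ->
  forall X, par (tApp (tConst (Ceps s3)) (tApp (tApp (tConst (Cpi s1 s2 s3)) A) B)) X ->
  par_joinable (decode_pi s1 s2 A1 B1) X.
Proof.
  intros Hrl IHA IHB X HX.
  apply par_app_inv in HX as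
    [(M2&N2&->&HM2&HN2)|[(?&?&?&?&E&_)|[(?&?&_&_&E&_)|
     (s1'&s2'&s3'&A'&A2&B'&B2&_&E1&E2&HA2&HB2&->)]]]; try discriminate.
  - apply par_const_inv in HM2; subst.
    apply par_code_pi_inv in HN2 as (A2&B2&->&HA2&HB2).
    destruct (IHA _ HA2) as (A3&?&?), (IHB _ HB2) as (B3&?&?).
    exists (decode_pi s1 s2 A3 B3); auto using par_decode_pi.
  - injection E2 as <- <- <- <- <-.
    destruct (IHA _ HA2) as (A3&?&?), (IHB _ HB2) as (B3&?&?).
    exists (decode_pi s1 s2 A3 B3); auto using par_decode_pi.
Qed.

Lemma par_diamond M M1 : par M M1 -> forall M2, par M M2 -> par_joinable M1 M2.
Proof.
  induction 1; intros M2 HM2.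
  1-4: inversion HM2; exists M2; auto.
  - eapply par_diamond_app; eauto.
  - apply par_lam_inv in HM2 as (A2&M2'&->&HA&HM).
    destruct (IHpar1 _ HA) as (A3&?&?), (IHpar2 _ HM) as (M3&?&?).
    exists (tLam A3 M3); auto.
  - apply par_pi_inv in HM2 as (A2&B2&->&HA&HB).
    destruct (IHpar1 _ HA) as (A3&?&?), (IHpar2 _ HB) as (B3&?&?).
    exists (tPi A3 B3); auto.
  - eapply par_diamond_beta; eauto.
  - apply par_app_inv in HM2 as
      [(M'&N'&->&HM&HN)|[(?&?&?&?&E&_)|[(s1'&s2'&_&E1&E2&->)|(?&?&?&?&?&?&?&_&_&E&_)]]];
      try discriminate.
    + apply par_const_inv in HM, HN; subst; exists (tConst (Cu s1)); auto.
    + injection E1 as ->; injection E2 as <-; exists (tConst (Cu s1)); auto.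
  - eapply par_diamond_rl; eauto.
Qed.

Lemma red1_par M N : red1 M N -> par M N.
Proof.
  induction 1 as [M N [H|H]| | | | | |]; auto.
  all: inversion H; subst; try apply par_rl; auto.
Qed.

Lemma par_red M N : par M N -> red M N.
Proof.
  induction 1; auto using rt_refl, rt_ctx_clos_app, rt_ctx_clos_lam, rt_ctx_clos_pi.
  - eapply rt_trans; [apply rt_ctx_clos_app; [apply rt_ctx_clos_lam|]; eauto using rt_refl|].
    apply rt_step, cc_root; left; constructor.
  - apply rt_step, cc_root; right; constructor; auto.
  - eapply rt_trans; [apply rt_ctx_clos_app; [|apply rt_ctx_clos_app; [apply rt_ctx_clos_app|]];
      eauto using rt_refl|].
    apply rt_step, cc_root; right; constructor; auto.
Qed.

Lemma red_iff_par_star M N : red M N <-> clos_refl_trans term par M N.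
Proof.
  split; induction 1; eauto using rt_refl, rt_trans, rt_step, red1_par, par_red.
Qed.

Lemma par_strip M N P : par M N -> clos_refl_trans term par M P ->
  exists Q, clos_refl_trans term par N Q /\ par P Q.
Proof.
  intros HMN HMP; revert N HMN; apply clos_rt_rt1n in HMP.
  induction HMP as [|M P0 P HP0 _ IH]; intros N HMN.
  - exists N; auto using rt_refl.
  - destruct (par_diamond _ _ HP0 _ HMN) as (Q&?&?).
    destruct (IH _ H) as (Q'&?&?).
    exists Q'; eauto using rt_trans, rt_step.
Qed.

Lemma red_confluent M N P : red M N -> red M P -> exists Q, red N Q /\ red P Q.
Proof.
  rewrite !red_iff_par_star; intros HMN HMP; revert P HMP.
  apply clos_rt_rt1n in HMN; induction HMN as [|M N0 N HN0 _ IH]; intros P HMP.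
  - exists P; rewrite !red_iff_par_star; auto using rt_refl.
  - destruct (par_strip _ _ _ HN0 HMP) as (Q&HQ&HPQ).
    destruct (IH _ HQ) as (Q'&?&?).
    exists Q'; split; auto. eapply rt_trans; [apply par_red|]; eauto.
Qed.

Lemma conv_refl M : conv M M.
Proof. apply rst_refl. Qed.

Lemma conv_sym M N : conv M N -> conv N M.
Proof. apply rst_sym. Qed.

Lemma conv_trans M N P : conv M N -> conv N P -> conv M P.
Proof. apply rst_trans. Qed.

Lemma red_conv M N : red M N -> conv M N.
Proof. unfold conv_betaR; induction 1; eauto using rst_step, rst_refl, rst_trans. Qed.

Lemma conv_join M N : conv M N -> exists Q, red M Q /\ red N Q.
Proof.
  induction 1 as [M N H|M|M N _ (Q&?&?)|M N P _ (Q1&?&?) _ (Q2&?&?)].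
  - exists N; split; [apply rt_step, H | apply rt_refl].
  - exists M; split; apply rt_refl.
  - exists Q; auto.
  - destruct (red_confluent N Q1 Q2) as (Q&?&?); auto.
    exists Q; split; eapply rt_trans; eauto.
Qed.

Lemma red_pi_inv A B X : red (tPi A B) X ->
  exists A' B', X = tPi A' B' /\ red A A' /\ red B B'.
Proof.
  intros H; apply clos_rt_rt1n in H; remember (tPi A B) as P eqn:EP; revert A B EP.
  induction H as [|P P' X H _ IH]; intros A B ->.
  - exists A, B; auto using rt_refl.
  - inversion H as [? ? [Hb|Hr]| | | | |A1 A2 ? HA|? B1 B2 HB]; subst.
    + inversion Hb.
    + inversion Hr.
    + destruct (IH A2 B eq_refl) as (A'&B'&->&?&?).
      exists A', B'; eauto using rt_trans, rt_step.
    + destruct (IH A B2 eq_refl) as (A'&B'&->&?&?).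
      exists A', B'; eauto using rt_trans, rt_step.
Qed.

Lemma red_kind_inv X : red tKind X -> X = tKind.
Proof.
  intros H; apply clos_rt_rt1n in H; remember tKind as P.
  induction H as [|P P' X H]; subst; auto.
  inversion H as [? ? [Hb|Hr]| | | | | |]; inversion Hb || inversion Hr.
Qed.

Lemma conv_pi_inj A B A' B' : conv (tPi A B) (tPi A' B') -> conv A A' /\ conv B B'.
Proof.
  intros (Q&H1&H2)%conv_join.
  apply red_pi_inv in H1 as (A1&B1&->&?&?), H2 as (A2&B2&E&?&?).
  injection E as <- <-.
  split; eapply conv_trans; eauto using conv_sym, red_conv.
Qed.

End Confluence.

(** * Typing: weakening, substitution and subject reduction *)

Scheme typing_ind_mut := Induction for typing Sort Prop
with wf_ind_mut := Induction for wf Sort Prop.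
Combined Scheme typing_wf_ind from typing_ind_mut, wf_ind_mut.

Section Typing.
Context {srt : Type} (ax : srt -> srt -> Prop) (rl : srt -> srt -> srt -> Prop).
Notation term := (term srt).
Notation typing := (typing ax rl).
Notation wf := (wf ax rl).
Notation conv := (conv_betaR ax rl).
Notation red1 := (ctx_clos (betaR ax rl)).
Notation red := (clos_refl_trans term red1).

Lemma betaR_lift M N k n : betaR ax rl M N -> betaR ax rl (lift k n M) (lift k n N).
Proof.
  intros [[]|[s1 s2 Hax|s1 s2 s3 A B Hrl]]; [left | right | right].
  - rewrite distr_lift_subst; constructor.
  - constructor; auto.
  - fold (decode_pi s1 s2 A B); rewrite lift_decode_pi; constructor; auto.
Qed.

Lemma betaR_subst_rec M N P k :
  betaR ax rl M N -> betaR ax rl (subst_rec P M k) (subst_rec P N k).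
Proof.
  intros [[]|[s1 s2 Hax|s1 s2 s3 A B Hrl]]; [left | right | right].
  - rewrite distr_subst; constructor.
  - constructor; auto.
  - fold (decode_pi s1 s2 A B); rewrite subst_rec_decode_pi; constructor; auto.
Qed.

Lemma beta1_red1 M N : beta1 M N -> red1 M N.
Proof. apply ctx_clos_mono; left; auto. Qed.

Lemma beta1_conv M N : beta1 M N -> conv M N.
Proof. intros; apply rst_step, beta1_red1; auto. Qed.

Lemma conv_lift M N k n : conv M N -> conv (lift k n M) (lift k n N).
Proof.
  apply (clos_rst_map (lift k n)); intros.
  apply ctx_clos_lift; [exact betaR_lift | assumption].
Qed.

Lemma conv_subst_rec M N P k : conv M N -> conv (subst_rec P M k) (subst_rec P N k).
Proof.
  apply (clos_rst_map (fun X => subst_rec P X k)); intros.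
  apply ctx_clos_subst_rec; [exact betaR_subst_rec | assumption].
Qed.

Lemma red_subst_rec_arg N N' M k : red N N' -> red (subst_rec N M k) (subst_rec N' M k).
Proof.
  intros H; apply red_iff_par_star in H; induction H; eauto using rt_refl, rt_trans.
  apply par_red, par_subst_rec; auto using par_refl.
Qed.

Lemma sig_decl_lift c A k n : sig_decl ax rl c A -> lift k n A = A.
Proof. inversion 1; reflexivity. Qed.

Lemma sig_decl_subst_rec c A P k : sig_decl ax rl c A -> subst_rec P A k = A.
Proof. inversion 1; reflexivity. Qed.

Lemma typing_wf G M T : typing G M T -> wf G.
Proof. induction 1; auto. Qed.

Lemma kind_not_typable G T : ~ typing G tKind T.
Proof. intros H; remember tKind as K; induction H; congruence. Qed.

Lemma typing_pi_inv G A B T : typing G (tPi A B) T ->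
  typing G A tType /\ exists s, typing (A :: G) B s /\ is_sort s /\ conv s T.
Proof.
  intros H; remember (tPi A B) as P; revert A B HeqP.
  induction H; intros ? ? E; try discriminate.
  - injection E as -> ->; eauto using conv_refl.
  - destruct (IHtyping1 _ _ E) as (?&s'&?&?&?); eauto 7 using conv_trans.
Qed.

Lemma typing_lam_inv G A M T : typing G (tLam A M) T ->
  exists B s, typing G (tPi A B) s /\ typing (A :: G) M B /\ conv (tPi A B) T.
Proof.
  intros H; remember (tLam A M) as P; revert A M HeqP.
  induction H; intros ? ? E; try discriminate.
  - injection E as -> ->; eauto 6 using conv_refl.
  - destruct (IHtyping1 _ _ E) as (B'&s'&?&?&?); eauto 6 using conv_trans.
Qed.

Fixpoint lift_ctx (n : nat) (G : list term) : list term :=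
  match G with [] => [] | A :: G' => lift (length G') n A :: lift_ctx n G' end.

Lemma length_lift_ctx n G : length (lift_ctx n G) = length G.
Proof. induction G; simpl; auto. Qed.

Lemma nth_error_lift_ctx n G i A : nth_error G i = Some A ->
  nth_error (lift_ctx n G) i = Some (lift (length G - S i) n A).
Proof.
  revert i; induction G; intros [|i] H; simpl in *; try discriminate; auto.
  injection H as ->; do 3 f_equal; lia.
Qed.

Lemma weakening_var G1 G0 D n A :
  wf (lift_ctx (length D) G1 ++ D ++ G0) -> nth_error (G1 ++ G0) n = Some A ->
  typing (lift_ctx (length D) G1 ++ D ++ G0)
    (lift (length G1) (length D) (tVar n)) (lift (length G1) (length D) (lift 0 (S n) A)).
Proof.
  intros Hwf HA; cbn [lift]; case_nat_tests.
  - rewrite nth_error_app2 in HA by lia.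
    rewrite simpl_lift by lia; replace (length D + S n) with (S (n + length D)) by lia.
    constructor; auto.
    rewrite !nth_error_app2 by (rewrite length_lift_ctx; lia); rewrite length_lift_ctx.
    rewrite <- HA; f_equal; lia.
  - rewrite nth_error_app1 in HA by lia.
    replace (lift (length G1) (length D) (lift 0 (S n) A))
      with (lift 0 (S n) (lift (length G1 - S n) (length D) A))
      by (rewrite permute_lift by lia; f_equal; lia).
    constructor; auto.
    rewrite nth_error_app1 by (rewrite length_lift_ctx; lia); apply nth_error_lift_ctx; auto.
Qed.

Lemma weakening_gen :
  (forall G M T, typing G M T -> forall G1 G0 D, G = G1 ++ G0 -> wf (D ++ G0) ->
     typing (lift_ctx (length D) G1 ++ D ++ G0)
       (lift (length G1) (length D) M) (lift (length G1) (length D) T)) /\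
  (forall G, wf G -> forall G1 G0 D, G = G1 ++ G0 -> wf (D ++ G0) ->
     wf (lift_ctx (length D) G1 ++ D ++ G0)).
Proof.
  apply typing_wf_ind; intros; subst; cbn [lift].
  - constructor; eauto.
  - apply weakening_var; eauto.
  - rewrite (sig_decl_lift _ _ _ _ s); constructor; eauto.
  - destruct i as [-> | ->]; eapply ty_pi; eauto;
      solve [apply (H0 (A :: G1)); auto | left; reflexivity | right; reflexivity].
  - econstructor; eauto. apply (H0 (A :: G1)); auto.
  - rewrite distr_lift_subst; econstructor; eauto.
  - econstructor; eauto using conv_lift. destruct i as [-> | ->]; [left | right]; auto.
  - destruct G1; [|discriminate]; simpl in *; subst; auto.
  - destruct G1 as [|B G1]; simpl in *; subst; auto.
    injection H0 as -> ->; econstructor; eauto.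
    destruct i as [-> | ->]; [left | right]; auto.
Qed.

Lemma weakening G M T D : typing G M T -> wf (D ++ G) ->
  typing (D ++ G) (lift 0 (length D) M) (lift 0 (length D) T).
Proof. intros; apply (proj1 weakening_gen G M T H [] G D); auto. Qed.

Fixpoint subst_ctx (N : term) (G : list term) : list term :=
  match G with [] => [] | A :: G' => subst_rec N A (length G') :: subst_ctx N G' end.

Lemma length_subst_ctx N G : length (subst_ctx N G) = length G.
Proof. induction G; simpl; auto. Qed.

Lemma nth_error_subst_ctx N G i A : nth_error G i = Some A ->
  nth_error (subst_ctx N G) i = Some (subst_rec N A (length G - S i)).
Proof.
  revert i; induction G; intros [|i] H; simpl in *; try discriminate; auto.
  injection H as ->; do 3 f_equal; lia.
Qed.

Lemma substitution_var G1 G0 N A n B :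
  typing G0 N A -> wf (subst_ctx N G1 ++ G0) -> nth_error (G1 ++ A :: G0) n = Some B ->
  typing (subst_ctx N G1 ++ G0)
    (subst_rec N (tVar n) (length G1)) (subst_rec N (lift 0 (S n) B) (length G1)).
Proof.
  intros HN Hwf HB; cbn [subst_rec]; case_nat_tests.
  - rewrite nth_error_app1 in HB by lia.
    replace (subst_rec N (lift 0 (S n) B) (length G1))
      with (lift 0 (S n) (subst_rec N B (length G1 - S n)))
      by (rewrite commut_lift_subst_rec by lia; f_equal; lia).
    constructor; auto.
    rewrite nth_error_app1 by (rewrite length_subst_ctx; lia); apply nth_error_subst_ctx; auto.
  - subst n; rewrite nth_error_app2, Nat.sub_diag in HB by lia; injection HB as ->.
    rewrite simpl_subst by lia; rewrite <- (length_subst_ctx N G1).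
    apply weakening; auto.
  - rewrite nth_error_app2 in HB by lia.
    destruct (n - length G1) as [|m] eqn:E; [lia|]; simpl in HB.
    rewrite simpl_subst by lia; replace n with (S (n - 1)) at 2 by lia.
    constructor; auto.
    rewrite nth_error_app2 by (rewrite length_subst_ctx; lia); rewrite length_subst_ctx.
    rewrite <- HB; f_equal; lia.
Qed.

Lemma substitution_gen N A G0 : typing G0 N A ->
  (forall G M T, typing G M T -> forall G1, G = G1 ++ A :: G0 ->
     typing (subst_ctx N G1 ++ G0) (subst_rec N M (length G1)) (subst_rec N T (length G1))) /\
  (forall G, wf G -> forall G1, G = G1 ++ A :: G0 -> wf (subst_ctx N G1 ++ G0)).
Proof.
  intros HN; apply typing_wf_ind; intros; subst; cbn [subst_rec].
  - constructor; eauto.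
  - apply substitution_var with A; eauto.
  - rewrite (sig_decl_subst_rec _ _ _ _ s); constructor; eauto.
  - destruct i as [-> | ->]; eapply ty_pi; eauto;
      solve [apply (H0 (A0 :: G1)); auto | left; reflexivity | right; reflexivity].
  - econstructor; eauto. apply (H0 (A0 :: G1)); auto.
  - rewrite distr_subst; econstructor; eauto.
  - econstructor; eauto using conv_subst_rec. destruct i as [-> | ->]; [left | right]; auto.
  - destruct G1; discriminate.
  - destruct G1 as [|B G1]; simpl in *; injection H0 as -> ->.
    + eapply typing_wf; eauto.
    + econstructor; eauto. destruct i as [-> | ->]; [left | right]; auto.
Qed.

Lemma substitution G A B M N : typing (A :: G) M B -> typing G N A ->
  typing G (subst M N) (subst B N).
Proof. intros HM HN; apply (proj1 (substitution_gen N A G HN) _ _ _ HM []); auto. Qed.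

Lemma sort_lift (s : term) k n : is_sort s -> lift k n s = s.
Proof. intros [-> | ->]; reflexivity. Qed.

Lemma sort_subst_rec (s P : term) k : is_sort s -> subst_rec P s k = s.
Proof. intros [-> | ->]; reflexivity. Qed.

Lemma wf_nth_error G n A : wf G -> nth_error G n = Some A ->
  exists s, is_sort s /\ typing (skipn (S n) G) A s.
Proof.
  revert n; induction G as [|B G IH]; intros [|n] Hwf HA; simpl in *; try discriminate.
  - injection HA as ->; inversion Hwf; eauto.
  - inversion Hwf; eauto using typing_wf.
Qed.

Lemma var_type_typable G n A : wf G -> nth_error G n = Some A ->
  exists s, is_sort s /\ typing G (lift 0 (S n) A) s.
Proof.
  intros Hwf HA; destruct (wf_nth_error G n A Hwf HA) as (s&Hs&HAs).
  exists s; split; auto.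
  assert (Hlen : length (firstn (S n) G) = S n).
  { apply firstn_length_le, nth_error_Some; congruence. }
  pose proof (weakening _ _ _ (firstn (S n) G) HAs) as W.
  rewrite firstn_skipn, Hlen, (sort_lift s) in W; auto.
Qed.

Lemma sig_decl_typable G c A : wf G -> sig_decl ax rl c A ->
  exists s, is_sort s /\ typing G A s.
Proof.
  intros Hwf Hc.
  assert (HU : forall G' s, wf G' -> typing G' (tConst (Cu s)) tType)
    by (intros; apply ty_const; auto; constructor).
  assert (Htype : is_sort (@tType srt)) by now left.
  assert (Hkind : is_sort (@tKind srt)) by now right.
  destruct Hc as [s|s|s1 s2 _|s1 s2 s3 _].
  - exists tKind; split; auto; constructor; auto.
  - exists tKind; split; auto.
    econstructor; eauto; constructor; econstructor; eauto.
  - exists tType; split; auto.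
  - exists tType; split; auto.
    assert (W1 : wf (tConst (Cu s1) :: G)) by (econstructor; eauto).
    assert (HE : typing (tConst (Cu s1) :: G) (tApp (tConst (Ceps s1)) (tVar 0)) tType).
    { change tType with (subst (@tType srt) (tVar 0)).
      apply ty_app with (A := tConst (Cu s1)); [apply ty_const; auto; constructor|].
      change (tConst (Cu s1)) with (lift 0 1 (@tConst srt (Cu s1))) at 2.
      constructor; auto. }
    assert (W2 : wf (tApp (tConst (Ceps s1)) (tVar 0) :: tConst (Cu s1) :: G))
      by (econstructor; eauto).
    assert (HP : typing (tConst (Cu s1) :: G)
                   (tPi (tApp (tConst (Ceps s1)) (tVar 0)) (tConst (Cu s2))) tType)
      by (econstructor; eauto).
    assert (W3 : wf (tPi (tApp (tConst (Ceps s1)) (tVar 0)) (tConst (Cu s2))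
                     :: tConst (Cu s1) :: G)) by (econstructor; eauto).
    apply ty_pi with (s := tType); auto.
    apply ty_pi with (s := tType); auto.
Qed.

Lemma type_correctness G M T : typing G M T ->
  T = tKind \/ exists s, is_sort s /\ typing G T s.
Proof.
  induction 1 as [| | | G A B s HA _ _ _ Hs | G A B M s HP| G M N A B HM IHM HN _|];
    eauto using var_type_typable, sig_decl_typable.
  - destruct Hs as [-> | ->]; auto.
    right; exists tKind; split; [now right | constructor; eauto using typing_wf].
  - right; apply typing_pi_inv in HP as (HA&s'&HB&Hs'&_).
    exists s'; split; eauto using ty_pi.
  - right; destruct IHM as [|(s&_&Hs)]; [discriminate|].
    apply typing_pi_inv in Hs as (_&s'&HB&Hs'&_).
    exists s'; split; auto.
    rewrite <- (sort_subst_rec s' N 0 Hs'); eauto using substitution.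
Qed.

Lemma app_type_typable G M N A B : typing G M (tPi A B) -> typing G N A ->
  exists s, is_sort s /\ typing G (subst B N) s.
Proof.
  intros HM HN.
  destruct (type_correctness _ _ _ (ty_app _ _ _ G M N A B HM HN)) as [E|]; auto.
  destruct (type_correctness _ _ _ HM) as [|(s&_&Hs)]; [discriminate|].
  apply typing_pi_inv in Hs as (_&s'&HB&_).
  unfold subst in E; destruct B as [| |[|n]| | | |]; simpl in E; try discriminate.
  - exfalso; eapply kind_not_typable; eauto.
  - rewrite lift0 in E; subst; exfalso; eapply kind_not_typable; eauto.
Qed.

Lemma ctx_conv_gen A A' G0 s : conv A A' -> typing G0 A' s -> is_sort s ->
  (forall G M T, typing G M T -> forall G1, G = G1 ++ A :: G0 -> typing (G1 ++ A' :: G0) M T) /\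
  (forall G, wf G -> forall G1, G = G1 ++ A :: G0 -> wf (G1 ++ A' :: G0)).
Proof.
  intros HAA' HA' Hs; apply typing_wf_ind; intros; subst;
    eauto using ty_sort, ty_const, ty_app, ty_conv.
  - assert (Hwf : wf (G1 ++ A' :: G0)) by auto.
    destruct (Nat.lt_trichotomy n (length G1)) as [Hn|[->|Hn]].
    + constructor; auto; rewrite nth_error_app1 in * by lia; auto.
    + rewrite nth_error_app2, Nat.sub_diag in e by lia; injection e as <-.
      destruct (wf_nth_error _ (length G1) A w) as (sA&HsA&HA).
      { rewrite nth_error_app2, Nat.sub_diag by lia; reflexivity. }
      rewrite skipn_app, skipn_all2, Nat.sub_succ_l, Nat.sub_diag in HA by lia.
      apply ty_conv with (lift 0 (S (length G1)) A') (lift 0 (S (length G1)) sA).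
      * constructor; auto. rewrite nth_error_app2, Nat.sub_diag by lia; reflexivity.
      * replace (S (length G1)) with (length (G1 ++ [A'])) by (rewrite length_app; simpl; lia).
        replace (G1 ++ A' :: G0) with ((G1 ++ [A']) ++ G0) in Hwf |- *
          by (rewrite <- app_assoc; reflexivity).
        apply weakening; auto.
      * rewrite sort_lift; auto.
      * apply conv_lift, conv_sym; auto.
    + constructor; auto; rewrite nth_error_app2 in * by lia.
      destruct (n - length G1) eqn:?; [lia | auto].
  - econstructor; eauto. apply (H0 (A0 :: G1)); auto.
  - econstructor; eauto. apply (H0 (A0 :: G1)); auto.
  - destruct G1; discriminate.
  - destruct G1 as [|B G1]; simpl in *; injection H0 as -> ->; econstructor; eauto.
Qed.

Lemma ctx_conv G A A' M T s : typing (A :: G) M T -> conv A A' -> typing G A' s ->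
  is_sort s -> typing (A' :: G) M T.
Proof. intros; apply (proj1 (ctx_conv_gen A A' G s H0 H1 H2) _ _ _ H []); auto. Qed.

Lemma typing_beta_root G A0 M N A B :
  typing G (tLam A0 M) (tPi A B) -> typing G N A -> typing G (subst M N) (subst B N).
Proof.
  intros HL HN.
  destruct (app_type_typable _ _ _ _ _ HL HN) as (s'&Hs'&HT).
  apply typing_lam_inv in HL as (B0&s&HP&HM&Hc).
  apply conv_pi_inj in Hc as (HA0A&HB0B).
  destruct (typing_pi_inv _ _ _ _ HP) as (HA0&_).
  apply ty_conv with (subst B0 N) s'; auto.
  - apply substitution with A0; auto.
    apply ty_conv with A tType; auto using conv_sym; now left.
  - apply conv_subst_rec; auto.
Qed.

Lemma subject_reduction_beta1 G M T : typing G M T -> forall M', beta1 M M' -> typing G M' T.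
Proof.
  induction 1 as [| | |G A B s HA IHA HB IHB Hs|G A B M s HP IHP HM IHM
    |G M N A B HM IHM HN IHN|G M A B s HM IHM HB _ Hs HAB]; intros M' Hr.
  1-3: inversion Hr as [? ? Hb| | | | | |]; inversion Hb.
  - inversion Hr as [? ? Hb| | | | |? A' ? HA'|? ? B' HB']; subst; [inversion Hb| |].
    + apply ty_pi with (s := s); auto.
      eapply ctx_conv; eauto using beta1_conv; now left.
    + apply ty_pi with (s := s); auto.
  - inversion Hr as [? ? Hb| | |? A' ? HAA'|? ? M'' HM''| |]; subst; [inversion Hb| |].
    + assert (HP' : typing G (tPi A' B) s) by (apply IHP, cc_pil; auto).
      destruct (typing_pi_inv _ _ _ _ HP') as (HA'&_).
      destruct (typing_pi_inv _ _ _ _ HP) as (HA&s'&HB&Hs'&_).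
      assert (Hc : conv A A') by (apply beta1_conv; auto).
      apply ty_conv with (tPi A' B) s'.
      * apply ty_lam with (s := s); auto. eapply ctx_conv; eauto; now left.
      * apply ty_pi with (s := s'); auto.
      * exact Hs'.
      * apply conv_sym, beta1_conv, cc_pil; auto.
    + apply ty_lam with (s := s); auto.
  - inversion Hr as [? ? Hb|? M'' ? HM''|? ? N' HN'| | | |]; subst.
    + inversion Hb; subst; eauto using typing_beta_root.
    + apply ty_app with A; auto.
    + destruct (app_type_typable _ _ _ _ _ HM HN) as (s'&Hs'&HT).
      apply ty_conv with (subst B N') s'; eauto using ty_app.
      apply conv_sym, red_conv, red_subst_rec_arg, rt_step, beta1_red1; auto.
  - apply ty_conv with A s; auto.
Qed.

Lemma subject_reduction G M M' T : typing G M T -> beta_star M M' -> typing G M' T.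
Proof. intros HM Hr; revert HM; induction Hr; eauto using subject_reduction_beta1. Qed.

End Typing.

(** * Stratification into objects, types and kinds *)

Section Classes.
Context {srt : Type} (ax : srt -> srt -> Prop) (rl : srt -> srt -> srt -> Prop).
Notation term := (term srt).
Notation typing := (typing ax rl).
Notation wf := (wf ax rl).
Notation conv := (conv_betaR ax rl).
Notation red1 := (ctx_clos (betaR ax rl)).
Notation red := (clos_refl_trans term red1).

Definition const_class (c : const srt) : nat :=
  match c with Cu _ | Ceps _ => 1 | Cdot _ _ | Cpi _ _ _ => 0 end.

(* Class 0: objects, 1: types and type families, 2: kinds.  [e] lists the
   classes of the variables in scope; binders of lambdaPi only bind objects. *)
Inductive has_class : list nat -> term -> nat -> Prop :=
| class_type e : has_class e tType 2
| class_var e n k : nth_error e n = Some k -> has_class e (tVar n) k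
| class_const e c : has_class e (tConst c) (const_class c)
| class_app e M N k : has_class e M k -> has_class e N 0 -> has_class e (tApp M N) k
| class_lam e A M k : has_class e A 1 -> has_class (0 :: e) M k -> has_class e (tLam A M) k
| class_pi e A B k : has_class e A 1 -> has_class (0 :: e) B k -> has_class e (tPi A B) k.
Hint Constructors has_class : core.

Lemma has_class_unique e M k k' : has_class e M k -> has_class e M k' -> k = k'.
Proof. intros H; revert k'; induction H; inversion 1; subst; auto; congruence. Qed.

Lemma kind_has_no_class e k : ~ has_class e tKind k.
Proof. inversion 1. Qed.

Lemma has_class_lift e1 e2 e3 M k : has_class (e1 ++ e2) M k ->
  has_class (e1 ++ e3 ++ e2) (lift (length e1) (length e3) M) k.
Proof.
  remember (e1 ++ e2) as e; intros H; revert e1 Heqe.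
  induction H; intros e1 ->; cbn [lift]; auto.
  - case_nat_tests; constructor.
    + rewrite !nth_error_app2 in * by lia; rewrite <- H; f_equal; lia.
    + rewrite nth_error_app1 in * by lia; auto.
  - constructor; auto; apply (IHhas_class2 (0 :: e1)); auto.
  - constructor; auto; apply (IHhas_class2 (0 :: e1)); auto.
Qed.

Lemma has_class_lift0 e e' M k : has_class e M k -> has_class (e' ++ e) (lift 0 (length e') M) k.
Proof. exact (has_class_lift [] e e' M k). Qed.

Lemma has_class_subst_rec e1 e2 j M N k :
  has_class (e1 ++ j :: e2) M k -> has_class e2 N j ->
  has_class (e1 ++ e2) (subst_rec N M (length e1)) k.
Proof.
  remember (e1 ++ j :: e2) as e; intros H HN; revert e1 Heqe.
  induction H; intros e1 ->; cbn [subst_rec]; auto.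
  - case_nat_tests; subst.
    + constructor; rewrite nth_error_app1 in * by lia; auto.
    + rewrite nth_error_app2, Nat.sub_diag in H by lia; injection H as <-.
      apply has_class_lift0; auto.
    + constructor; rewrite nth_error_app2 in * by lia.
      destruct (n - length e1) eqn:E; [lia|]; simpl in H; rewrite <- H; f_equal; lia.
  - constructor; auto; apply (IHhas_class2 (0 :: e1)); auto.
  - constructor; auto; apply (IHhas_class2 (0 :: e1)); auto.
Qed.

Lemma has_class_subst e M N j k :
  has_class (j :: e) M k -> has_class e N j -> has_class e (subst M N) k.
Proof. exact (has_class_subst_rec [] e j M N k). Qed.

Lemma has_class_ctx_clos (r : relation term) :
  (forall M N e k, r M N -> has_class e M k -> has_class e N k) ->
  forall M N, ctx_clos r M N -> forall e k, has_class e M k -> has_class e N k.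
Proof. intros Hr M N H; induction H; intros e k HM; inversion HM; subst; eauto. Qed.

Lemma has_class_head_beta M N e k : head_beta M N -> has_class e M k -> has_class e N k.
Proof.
  intros [A M0 N0] HM; inversion HM as [| | |? ? ? ? HL HN| |]; subst.
  inversion HL; subst; eapply has_class_subst; eauto.
Qed.

Lemma has_class_head_R M N e k : head_R ax rl M N -> has_class e M k -> has_class e N k.
Proof.
  intros [s1 s2 _|s1 s2 s3 A B _] HM;
    repeat match goal with H : has_class _ (tApp _ _) _ |- _ => inversion H; subst; clear H end;
    repeat match goal with H : has_class _ (tConst _) _ |- _ => inversion H; subst; clear H end.
  - exact (class_const _ (Cu s1)).
  - apply class_pi; apply class_app; try exact (class_const _ (Ceps _)); auto.
    apply class_app; [apply (has_class_lift0 _ [0]); auto | constructor; reflexivity].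
Qed.

Lemma has_class_red M N e k : red M N -> has_class e M k -> has_class e N k.
Proof.
  induction 1 as [M N H| |]; eauto.
  eapply (has_class_ctx_clos (betaR ax rl)); [|exact H].
  intros ? ? ? ? [|]; eauto using has_class_head_beta, has_class_head_R.
Qed.

Lemma has_class_beta_star (M N : term) e k : beta_star M N -> has_class e M k -> has_class e N k.
Proof.
  induction 1 as [M N H| |]; eauto.
  eapply (has_class_ctx_clos head_beta); [|exact H].
  exact has_class_head_beta.
Qed.

Lemma has_class_conv M N e k k' : conv M N -> has_class e M k -> has_class e N k' -> k = k'.
Proof.
  intros (Q&HMQ&HNQ)%conv_join HM HN.
  apply (has_class_unique e Q); [apply (has_class_red M) | apply (has_class_red N)]; auto.
Qed.

Inductive class_env : list term -> list nat -> Prop :=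
| class_env_nil : class_env [] []
| class_env_cons G e A k : class_env G e -> has_class e A (S k) -> class_env (A :: G) (k :: e).

Lemma class_env_nth_error G e n A : class_env G e -> nth_error G n = Some A ->
  exists k, nth_error e n = Some k /\ has_class e (lift 0 (S n) A) (S k).
Proof.
  intros He; revert n; induction He as [|G e B k' He IH HB]; intros [|n] HA;
    simpl in *; try discriminate.
  - injection HA as ->; exists k'; split; auto; apply (has_class_lift0 _ [k']); auto.
  - destruct (IH n HA) as (k&Hk&HAk); exists k; split; auto.
    change (S (S n)) with (1 + S n); rewrite <- (simpl_lift A (S n) 0 1 0) by lia.
    apply (has_class_lift0 _ [k']); auto.
Qed.

Lemma sig_decl_class e c A : sig_decl ax rl c A -> has_class e A (S (const_class c)).
Proof. inversion 1; repeat econstructor. Qed.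

Definition type_of_class (e : list nat) (T : term) (k : nat) : Prop :=
  (T = tKind /\ k = 2) \/ has_class e T (S k).

Lemma typing_class G M T : typing G M T -> forall e, class_env G e ->
  exists k, has_class e M k /\ type_of_class e T k.
Proof.
  unfold type_of_class.
  induction 1 as [G _|G n A _ HA|G c A _ Hc|G A B s _ IHA _ IHB Hs|G A B M s _ IHP _ IHM
    |G M N A B _ IHM _ IHN|G M A B s _ IHM _ IHB _ HAB]; intros e He.
  - exists 2; auto.
  - destruct (class_env_nth_error _ _ _ _ He HA) as (k&?&?); eauto.
  - exists (const_class c); split; auto; right; apply sig_decl_class; auto.
  - destruct (IHA e He) as (k1&HA&[[? ?]|HT]); [discriminate|inversion HT; subst].
    destruct (IHB (0 :: e)) as (k2&HB&HBs); [constructor; auto|].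
    destruct Hs as [-> | ->], HBs as [[? ?]|HBs]; subst; try discriminate;
      try (inversion HBs; subst); eauto 6.
  - destruct (IHP e He) as (k1&HP&_); inversion HP; subst.
    destruct (IHM (0 :: e)) as (k2&HM&[[-> ->]|HB]); [constructor; auto| |].
    + exfalso; eapply kind_has_no_class; eauto.
    + assert (k1 = S k2) by (eapply has_class_unique; eauto); subst; eauto.
  - destruct (IHM e He) as (k1&HM&[[? ?]|HT]); [discriminate|].
    destruct (IHN e He) as (k2&HN&[[-> ->]|HA]); inversion HT; subst.
    + exfalso; eapply kind_has_no_class; eauto.
    + assert (k2 = 0) by (eapply has_class_unique in HA; eauto; congruence); subst.
      exists k1; split; auto; right; eapply has_class_subst; eauto.
  - destruct (IHM e He) as (k1&HM&[[-> ->]|HA]), (IHB e He) as (k2&HB&_).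
    + destruct (conv_join ax rl _ _ HAB) as (Q&HKQ&HBQ).
      apply red_kind_inv in HKQ; subst.
      exfalso; eapply kind_has_no_class, (has_class_red B); eauto.
    + exists k1; split; auto; right.
      rewrite (has_class_conv _ _ _ _ _ HAB HA HB); auto.
Qed.

Lemma wf_class_env G : wf G -> exists e, class_env G e.
Proof.
  induction G as [|A G IH]; intros Hwf.
  - exists []; constructor.
  - inversion Hwf as [|? ? s HA Hs]; subst.
    destruct (IH (typing_wf ax rl _ _ _ HA)) as (e&He).
    destruct (typing_class _ _ _ HA e He) as (k&Hk&[[-> ->]|HsA]).
    + exists (1 :: e); constructor; auto.
    + destruct Hs as [-> | ->]; inversion HsA; subst.
      exists (0 :: e); constructor; auto.
Qed.

Lemma kind_level_class G P e : class_env G e -> kind_level ax rl G P -> has_class e P 1.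
Proof.
  intros He (C&HP&HC).
  destruct (typing_class _ _ _ HC e He) as (k&Hk&[[_ ->]|HK]).
  2: { exfalso; eapply kind_has_no_class; eauto. }
  destruct (typing_class _ _ _ HP e He) as (k'&Hk'&[[-> _]|HC']).
  - exfalso; eapply kind_not_typable; eauto.
  - assert (S k' = 2) as [= ->] by (eapply has_class_unique; eauto); auto.
Qed.

End Classes.

(** * Contracting the Kind-level redexes *)

Section KindRedexes.
Context {srt : Type}.
Notation term := (term srt).

Definition type_family_lam (e : list nat) (M : term) : Prop :=
  (exists B C, M = tLam B C) /\ has_class e M 1.

Inductive kind_redex_free : list nat -> term -> Prop :=
| krf_type e : kind_redex_free e tType
| krf_kind e : kind_redex_free e tKind
| krf_var e n : kind_redex_free e (tVar n)
| krf_const e c : kind_redex_free e (tConst c)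
| krf_app e M N : kind_redex_free e M -> kind_redex_free e N -> ~ type_family_lam e M ->
    kind_redex_free e (tApp M N)
| krf_lam e A M : kind_redex_free e A -> kind_redex_free (0 :: e) M ->
    kind_redex_free e (tLam A M)
| krf_pi e A B : kind_redex_free e A -> kind_redex_free (0 :: e) B ->
    kind_redex_free e (tPi A B).
Hint Constructors kind_redex_free : core.

Lemma type_family_lam_lift e1 e2 e3 M k : has_class (e1 ++ e2) M k ->
  type_family_lam (e1 ++ e3 ++ e2) (lift (length e1) (length e3) M) ->
  type_family_lam (e1 ++ e2) M.
Proof.
  intros HM ((B&C&E)&H1).
  rewrite (has_class_unique _ _ _ _ (has_class_lift e1 e2 e3 M k HM) H1) in HM.
  split; auto.
  destruct M; cbn [lift] in E; try discriminate; eauto.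
  destruct (Nat.leb _ _); discriminate.
Qed.

(* A substitution creates a lambda only in place of the substituted variable,
   an object here, so no new redex of class 1 can appear. *)
Lemma type_family_lam_subst_rec e1 e2 M N k :
  has_class (e1 ++ 0 :: e2) M k -> has_class e2 N 0 ->
  type_family_lam (e1 ++ e2) (subst_rec N M (length e1)) ->
  type_family_lam (e1 ++ 0 :: e2) M.
Proof.
  intros HM HN ((B&C&E)&H1).
  pose proof (has_class_unique _ _ _ _ (has_class_subst_rec e1 e2 0 M N k HM HN) H1) as ->.
  split; auto.
  destruct M; cbn [subst_rec] in E; try discriminate; eauto.
  exfalso; destruct (Nat.ltb_spec n (length e1)); try discriminate.
  destruct (Nat.eqb_spec n (length e1)); try discriminate; subst.
  inversion HM as [|? ? ? Hn| | | |]; subst.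
  rewrite nth_error_app2, Nat.sub_diag in Hn by lia; discriminate.
Qed.

Lemma kind_redex_free_lift e1 e2 e3 M k :
  has_class (e1 ++ e2) M k -> kind_redex_free (e1 ++ e2) M ->
  kind_redex_free (e1 ++ e3 ++ e2) (lift (length e1) (length e3) M).
Proof.
  remember (e1 ++ e2) as e; intros HM; revert e1 Heqe.
  induction HM; intros e1 -> Hkrf; inversion Hkrf; subst; cbn [lift]; auto.
  - case_nat_tests; auto.
  - constructor; auto.
    intros HL; eapply type_family_lam_lift in HL; eauto.
  - constructor; auto; apply (IHHM2 (0 :: e1)); auto.
  - constructor; auto; apply (IHHM2 (0 :: e1)); auto.
Qed.

Lemma kind_redex_free_subst_rec e1 e2 M N k :
  has_class (e1 ++ 0 :: e2) M k -> kind_redex_free (e1 ++ 0 :: e2) M ->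
  has_class e2 N 0 -> kind_redex_free e2 N ->
  kind_redex_free (e1 ++ e2) (subst_rec N M (length e1)).
Proof.
  remember (e1 ++ 0 :: e2) as e; intros HM; revert e1 Heqe.
  induction HM; intros e1 -> Hkrf HN HkN; inversion Hkrf; subst; cbn [subst_rec]; auto.
  - case_nat_tests; auto; apply (kind_redex_free_lift [] e2 e1 N 0); auto.
  - constructor; auto.
    intros HL; eapply type_family_lam_subst_rec in HL; eauto.
  - constructor; auto; apply (IHHM2 (0 :: e1)); auto.
  - constructor; auto; apply (IHHM2 (0 :: e1)); auto.
Qed.

Lemma kind_redex_free_app_reduct e M N k :
  has_class e M k -> kind_redex_free e M -> has_class e N 0 -> kind_redex_free e N ->
  exists P, beta_star (tApp M N) P /\ kind_redex_free e P.
Proof.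
  intros HM HkM HN HkN.
  assert (Hstay : ~ type_family_lam e M -> exists P, beta_star (tApp M N) P /\ kind_redex_free e P)
    by (exists (tApp M N); split; [apply rt_refl | auto]).
  destruct (Nat.eq_dec k 1) as [->|Hk].
  - destruct M as [| | | | |B C|]; try (apply Hstay; intros ((?&?&?)&_); discriminate).
    exists (subst C N); split.
    + apply rt_step, cc_root; constructor.
    + inversion HM; inversion HkM; subst.
      apply (kind_redex_free_subst_rec [] e C N 1); auto.
  - apply Hstay; intros (_&H1); apply Hk; eapply has_class_unique; eauto.
Qed.

Lemma kind_redex_normalization e M k : has_class e M k ->
  exists M', beta_star M M' /\ kind_redex_free e M'.
Proof.
  induction 1 as [e|e n k|e c|e M N k HM (M1&HM1&HkM1) HN (N1&HN1&HkN1)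
    |e A M k _ (A1&?&?) _ (M1&?&?)|e A B k _ (A1&?&?) _ (B1&?&?)].
  1-3: eexists; split; [apply rt_refl | auto].
  - destruct (kind_redex_free_app_reduct e M1 N1 k) as (P&?&?); eauto using has_class_beta_star.
    exists P; split; auto; eapply rt_trans; [apply rt_ctx_clos_app|]; eauto.
  - exists (tLam A1 M1); split; auto; apply rt_ctx_clos_lam; auto.
  - exists (tPi A1 B1); split; auto; apply rt_ctx_clos_pi; auto.
Qed.

Lemma subterm_kind_redex_free G M D P e k :
  subterm_in G M D P -> class_env G e -> has_class e M k -> kind_redex_free e M ->
  exists e' k', class_env D e' /\ has_class e' P k' /\ kind_redex_free e' P.
Proof.
  intros Hsub; revert e k; induction Hsub; intros e k He HM HkM;
    inversion HM; inversion HkM; subst; eauto.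
  all: apply (IHHsub (0 :: e) k); auto; constructor; auto.
Qed.

End KindRedexes.

Theorem lemma5p3 (srt : Type) (ax : srt -> srt -> Prop)
    (rl : srt -> srt -> srt -> Prop) (Hfun : functional_spec ax rl)
    (G : ctx srt) (M A : term srt)
    (HG : wf ax rl G) (HM : typing ax rl G M A) :
  exists M' : term srt, beta_star M M' /\ lamPiMinus_term ax rl G M'.
Proof.
  destruct (wf_class_env ax rl G HG) as (e&He).
  destruct (typing_class ax rl _ _ _ HM e He) as (k&Hk&_).
  destruct (kind_redex_normalization e M k Hk) as (M'&Hred&Hfree).
  exists M'; split; [|split]; auto.
  - exists A; eapply subject_reduction; eauto.
  - intros (D&B&C&P&Hsub&Hkind).
    assert (HM' : has_class e M' k) by (eapply has_class_beta_star; eauto).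
    destruct (subterm_kind_redex_free _ _ _ _ _ _ Hsub He HM' Hfree) as (e'&k'&He'&HP&HfP).
    inversion HfP as [| | | |? ? ? _ _ Hnot| |]; subst; apply Hnot.
    pose proof (kind_level_class ax rl _ _ _ He' Hkind) as Hredex.
    inversion Hredex; subst; split; eauto.
Qed.
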